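(* Let $R$ be a left localizable ring such that $\max\mathrm{Den}_l(R)=\{S_1,\ldots,S_n\}$ (with the $S_i$ distinct), and let $\mathfrak{a}_j:=\mathrm{ass}(S_j)$. (1) If $n=1$ then $S_{1,c}=S_1=R\setminus\{0\}$. (2) If $n\geq 2$ then $S_{i,c}=S_i\cap\bigcap_{j\neq i}\mathfrak{a}_j$ for each $i=1,\ldots,n$.
   Context: All rings are associative with $1$. A multiplicative subset $S$ of $R$ ($1\in S$, $0\notin S$, closed under multiplication) is a left Ore set if $Sr\cap Rs\neq\emptyset$ for all $r\in R$, $s\in S$; for it, $\mathrm{ass}(S):=\{r\in R: sr=0\text{ for some } s\in S\}$. A left Ore set $S$ is a left denominator set if $rs=0$ ($r\in R$, $s\in S$) implies $tr=0$ for some $t\in S$. $\max\mathrm{Den}_l(R)$ is the set of maximal elements, under inclusion, of the set of left denominator sets of $R$. A ring $R$ is left localizable if every nonzero $r\in R$ lies in some left denominator set. For $s\in R$, $\ker(s\cdot):=\{r\in R: sr=0\}$; the core of a left Ore set $S$ is $S_c:=\{s\in S:\ker(s\cdot)=\mathrm{ass}(S)\}$, and $S_{i,c}$ denotes the core of $S_i$. *)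

From mathcomp Require Import all_boot all_order all_algebra.
Set Implicit Arguments. Unset Strict Implicit. Unset Printing Implicit Defensive.
Import GRing.Theory.
Local Open Scope ring_scope.

Definition set_eq (R : Type) (A B : R -> Prop) : Prop := forall x, A x <-> B x.
Definition subset (R : Type) (A B : R -> Prop) : Prop := forall x, A x -> B x.

Section Ore.
Variable R : pzRingType.

Definition mult_subset (S : R -> Prop) : Prop :=
  S 1 /\ ~ S 0 /\ (forall a b, S a -> S b -> S (a * b)).

Definition left_Ore (S : R -> Prop) : Prop :=
  mult_subset S /\
  (forall r s, S s -> exists s' r', S s' /\ s' * r = r' * s).

Definition ass (S : R -> Prop) (r : R) : Prop := exists s, S s /\ s * r = 0.

Definition left_den (S : R -> Prop) : Prop :=
  left_Ore S /\
  (forall r s, S s -> r * s = 0 -> exists t, S t /\ t * r = 0).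

Definition max_left_den (S : R -> Prop) : Prop :=
  left_den S /\ (forall T, left_den T -> subset S T -> subset T S).

Definition left_localizable : Prop :=
  forall r : R, r != 0 -> exists S, left_den S /\ S r.

Definition lker (s : R) (r : R) : Prop := s * r = 0.

Definition core (S : R -> Prop) (s : R) : Prop :=
  S s /\ set_eq (lker s) (ass S).
End Ore.

From Pilot Require Import Defs.
From mathcomp Require Import all_boot all_order all_algebra.
From mathcomp Require boolp classical_sets.
Set Implicit Arguments. Unset Strict Implicit. Unset Printing Implicit Defensive.
Import GRing.Theory.
Local Open Scope ring_scope.

(* A left localizable ring is reduced, and in a reduced ring whether a product
   annihilates an element does not depend on the order of its factors.  Hence,
   if S is a maximal left denominator set and T a multiplicative set with
   [s * t != 0] for [s] in S and [t] in T, satisfying an Ore condition relative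
   to S u T, the multiplicative closure of S u T is a left denominator set, and
   maximality forces T to be contained in S.
   Taking T to be another maximal set gives elements of S_i inside a_k for
   k <> i, whose product lies in S_i and in every a_k (k <> i).  Taking T to be
   the powers of an element x outside a_i shows that S_i = R \ a_i.  Since every
   nonzero element lies in some S_k (Zorn) and S_k meets no a_k, the
   description of the cores follows. *)

Section LeftDenBasics.
Variable R : pzRingType.

Lemma left_localizable_reduced : left_localizable R -> forall x : R, x * x = 0 -> x = 0.
Proof.
move=> R_loc x xx0; case: (eqVneq x 0) => // x_neq0.
have [S [[[[_ [S0 S_mul]] _] _] Sx]] := R_loc x x_neq0.
by case: S0; rewrite -xx0; exact: S_mul.
Qed.

Lemma ass_mull (S : R -> Prop) (r y : R) : left_Ore S -> ass S y -> ass S (r * y).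
Proof.
move=> [_ S_Ore] [s [Ss sy0]].
have [s' [r' [Ss' e]]] := S_Ore r s Ss.
by exists s'; split=> //; rewrite mulrA e -mulrA sy0 mulr0.
Qed.

Lemma ass_mulr (S : R -> Prop) (r y : R) : ass S y -> ass S (y * r).
Proof. by move=> [s [Ss sy0]]; exists s; split=> //; rewrite mulrA sy0 mul0r. Qed.

Lemma mult_subset_notin_ass (S : R -> Prop) (y : R) : mult_subset S -> S y -> ~ ass S y.
Proof. by move=> [_ [S0 S_mul]] Sy [s [Ss sy0]]; apply: S0; rewrite -sy0; exact: S_mul. Qed.

End LeftDenBasics.

Section ReducedRing.
Variable R : pzRingType.
Hypothesis mulxx_eq0 : forall x : R, x * x = 0 -> x = 0.

Lemma mul_eq0C (x y : R) : x * y = 0 -> y * x = 0.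
Proof. by move=> xy0; apply: mulxx_eq0; rewrite -mulrA (mulrA x) xy0 mul0r mulr0. Qed.

Lemma mul_eq0_in (x r y : R) : x * y = 0 -> x * r * y = 0.
Proof.
move=> xy0; apply: mulxx_eq0.
by rewrite -!mulrA (mulrA y) (mul_eq0C xy0) mul0r !mulr0.
Qed.

Lemma mul_dup_eq0r (y x : R) : y * x * x = 0 -> y * x = 0.
Proof. by move=> yxx0; apply: mulxx_eq0; rewrite -mulrA (mul_eq0C yxx0) mulr0. Qed.

Lemma mul_dup_eq0l (z w : R) : z * z * w = 0 -> z * w = 0.
Proof.
move=> zzw0; have zzw0' : z * (z * w) = 0 by rewrite mulrA.
by apply: mulxx_eq0; rewrite mulrA (mul_eq0C zzw0') mul0r.
Qed.

Lemma mul_eq0_swap12 (u v w : R) : u * v * w = 0 -> v * u * w = 0.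
Proof.
move=> uvw0; apply: mul_dup_eq0l.
have uvuw0 : u * v * u * w = 0 by exact: mul_eq0_in.
have -> : v * u * (v * u) * w = v * (u * v * u * w) by rewrite !mulrA.
by rewrite uvuw0 mulr0.
Qed.

Lemma mul_eq0_swap23 (q u v w : R) : q * u * v * w = 0 -> q * v * u * w = 0.
Proof.
move=> quvw0; have uvwq0 : u * v * (w * q) = 0.
  by rewrite mulrA; apply: mul_eq0C; rewrite !mulrA.
have vuwq0 : v * u * w * q = 0 by rewrite -mulrA; exact: mul_eq0_swap12.
by move: (mul_eq0C vuwq0); rewrite !mulrA.
Qed.

Section MulClosure.
Variables S T : R -> Prop.
Hypothesis S_den : left_den S.
Hypothesis T1 : T 1.
Hypothesis T_mul : forall a b, T a -> T b -> T (a * b).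
Hypothesis T_Ore : forall t r, T t -> exists w r', (S w \/ T w) /\ w * r = r' * t.
Hypothesis ST_neq0 : forall s t, S s -> T t -> s * t <> 0.

Inductive mul_closure : R -> Prop :=
| mul_closureS s : S s -> mul_closure s
| mul_closureT t : T t -> mul_closure t
| mul_closureM a b : mul_closure a -> mul_closure b -> mul_closure (a * b).

Lemma mul_closure_lker u : mul_closure u ->
  exists s t, S s /\ T t /\ forall r, u * r = 0 <-> s * t * r = 0.
Proof.
have [[[S1 [_ S_mul]] _] _] := S_den.
elim=> [s Ss|t Tt|a b _ [s1 [t1 [Ss1 [Tt1 ker_a]]]] _ [s2 [t2 [Ss2 [Tt2 ker_b]]]]].
- by exists s, 1; split=> //; split=> // r; rewrite mulr1.
- by exists 1, t; split=> //; split=> // r; rewrite mul1r.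
exists (s2 * s1), (t2 * t1); split; first exact: S_mul.
split=> [|r]; first exact: T_mul.
have -> : a * b * r = 0 <-> b * (s1 * t1 * r) = 0.
  split=> [abr0|bstr0].
  - have : s1 * t1 * (b * r) = 0 by apply/ker_a; rewrite mulrA.
    by rewrite mulrA => /mul_eq0_swap12; rewrite !mulrA.
  - rewrite -mulrA; apply/ker_a; rewrite mulrA; apply: mul_eq0_swap12.
    by rewrite -mulrA.
rewrite ker_b; split=> stsr0.
- by move: stsr0; rewrite !mulrA -(mulrA _ t1) => /mul_eq0_swap23; rewrite !mulrA.
- rewrite !mulrA -(mulrA _ t1); apply: mul_eq0_swap23.
  by move: stsr0; rewrite !mulrA.
Qed.

Lemma mul_closure_Ore u r : mul_closure u ->
  exists w r', mul_closure w /\ w * r = r' * u.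
Proof.
have [[_ S_Ore] _] := S_den.
move=> cl_u; elim: cl_u r => [s Ss|t Tt|a b _ IHa _ IHb] r.
- have [w [r' [Sw e]]] := S_Ore r s Ss.
  by exists w, r'; split=> //; exact: mul_closureS.
- have [w [r' [STw e]]] := T_Ore r Tt.
  by exists w, r'; split=> //; case: STw; [exact: mul_closureS|exact: mul_closureT].
have [w1 [r1 [cl_w1 e1]]] := IHb r.
have [w2 [r2 [cl_w2 e2]]] := IHa r1.
exists (w2 * w1), r2; split; first exact: mul_closureM.
by rewrite -mulrA e1 mulrA e2 mulrA.
Qed.

Lemma mul_closure_left_den : left_den mul_closure.
Proof.
have [[[S1 _] _] _] := S_den.
split; [split; [split; [exact: mul_closureS|split]|]|].
- move=> /mul_closure_lker [s [t [Ss [Tt ker0]]]].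
  by apply: (ST_neq0 Ss Tt); rewrite -[s * t]mulr1; apply/ker0; rewrite mul0r.
- exact: mul_closureM.
- by move=> r s cl_s; exact: mul_closure_Ore.
by move=> r s cl_s rs0; exists s; split=> //; exact: mul_eq0C.
Qed.

Lemma max_left_den_absorb : max_left_den S -> Defs.subset T S.
Proof.
move=> [_ S_max] t Tt.
apply: (S_max _ mul_closure_left_den) => [s|]; first exact: mul_closureS.
exact: mul_closureT.
Qed.

End MulClosure.

Lemma max_left_den_factor (S : R -> Prop) (x q : R) : max_left_den S ->
  (forall s, S s -> s * x <> 0) -> S (q * x) -> S x.
Proof.
move=> S_max Sx_neq0 Sqx; have [[[[S1 [S0 S_mul]] S_Ore] _] _] := S_max.
have Sxk_neq0 k s : S s -> s * x ^+ k.+1 <> 0.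
  elim: k s => [|k IH] s Ss; first by rewrite expr1; exact: Sx_neq0.
  move=> sxk0; apply: (IH s Ss); rewrite exprSr mulrA; apply: mul_dup_eq0r.
  by move: sxk0; rewrite !exprSr !mulrA.
have Ore_pow k r : exists w r', S w /\ w * r = r' * x ^+ k.
  elim: k r => [|k IH] r; first by exists 1, r; rewrite mul1r expr0 mulr1.
  have [w1 [r1 [Sw1 e1]]] := S_Ore r _ Sqx.
  have [w2 [r2 [Sw2 e2]]] := IH (r1 * q).
  exists (w2 * w1), r2; split; first exact: S_mul.
  by rewrite -mulrA e1 (mulrA r1) mulrA e2 exprSr mulrA.
apply: (@max_left_den_absorb S (fun y => exists k, y = x ^+ k)) => //.
- by case: S_max.
- by exists 0%N; rewrite expr0.
- by move=> _ _ [k ->] [l ->]; exists (k + l)%N; rewrite exprD.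
- move=> _ r [k ->]; have [w [r' [Sw e]]] := Ore_pow k r.
  by exists w, r'; split=> //; left.
- move=> s _ Ss [[|k] ->]; last exact: Sxk_neq0.
  by rewrite expr0 mulr1 => s0; apply: S0; rewrite -s0.
- by exists 1%N; rewrite expr1.
Qed.

Lemma max_left_den_meet_ass (S T : R -> Prop) :
  max_left_den S -> max_left_den T -> ~ set_eq S T -> exists p, S p /\ ass T p.
Proof.
move=> S_max T_max neST; apply: boolp.contrapT => no_p; apply: neST.
have [[[[T1 [_ T_mul]] T_Ore] _] T_maxl] := T_max.
have TS : Defs.subset T S.
  apply: (@max_left_den_absorb S T) => //; first by case: S_max.
  - move=> t r Tt; have [w [r' [Tw e]]] := T_Ore r t Tt.
    by exists w, r'; split=> //; right.
  - move=> s t Ss Tt st0; apply: no_p; exists s; split=> //.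
    by exists t; split=> //; exact: mul_eq0C.
by move=> r; split; [apply: T_maxl => //; case: S_max|exact: TS].
Qed.

End ReducedRing.

Section MaximalLeftDen.
Variable R : pzRingType.

Lemma left_den_chain_union (I : Type) (W : I -> R -> Prop) (V : R -> Prop) (i0 : I) :
  (forall i, left_den (W i)) ->
  (forall i j, Defs.subset (W i) (W j) \/ Defs.subset (W j) (W i)) ->
  (forall r, V r <-> exists i, W i r) -> left_den V.
Proof.
move=> W_den W_chain V_union.
have W_V i r : W i r -> V r by move=> Wir; apply/V_union; exists i.
have [[[W1 _] _] _] := W_den i0.
split; [split; [split; [exact: W_V W1|split]|]|].
- by move=> /V_union [i Wi0]; have [[[_ [W0 _]] _] _] := W_den i; exact: W0.
- move=> a b /V_union [i Wia] /V_union [j Wjb].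
  have [[[_ [_ Wi_mul]] _] _] := W_den i; have [[[_ [_ Wj_mul]] _] _] := W_den j.
  have [Wij|Wji] := W_chain i j.
  + by apply: (W_V j); apply: Wj_mul (Wij _ Wia) Wjb.
  + by apply: (W_V i); apply: Wi_mul Wia (Wji _ Wjb).
- move=> r s /V_union [i Wis]; have [[_ Wi_Ore] _] := W_den i.
  have [s' [r' [Wis' e]]] := Wi_Ore r s Wis.
  by exists s', r'; split=> //; exact: W_V Wis'.
- move=> r s /V_union [i Wis] rs0; have [_ Wi_den] := W_den i.
  have [t [Wit tr0]] := Wi_den r s Wis rs0.
  by exists t; split=> //; exact: W_V Wit.
Qed.

(* Zorn's lemma is applied to the sets X with X u T0 a left denominator set, so
   that the empty chain causes no trouble. *)
Lemma left_den_sub_max (T0 : R -> Prop) : left_den T0 ->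
  exists M, max_left_den M /\ Defs.subset T0 M.
Proof.
move=> T0_den; pose P (X : R -> Prop) := left_den (fun r => X r \/ T0 r).
have [|A [PA A_max]] := @classical_sets.Zorn_bigcup R P.
  move=> F FP F_chain.
  pose W (i : option {X : R -> Prop | F X}) :=
    if i is Some X then fun r => sval X r \/ T0 r else T0.
  apply: (@left_den_chain_union _ W _ None).
  - by case=> [[X FX]|] //=; exact: FP.
  - case=> [[X FX]|]; case=> [[Y FY]|] /=; try by [left=> r; right|right=> r; right].
    + by have [XY|YX] := F_chain X Y FX FY; [left|right] => r [?|?]; by [left; auto|right].
    + by left.
  - move=> r; split=> [[[X FX Xr]|T0r]|[[[X FX]|] /= Wr]].
    + by exists (Some (exist _ X FX)); left.
    + by exists None.
    + by case: Wr => ?; [left; exists X|right].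
    + by right.
exists (fun r => A r \/ T0 r); split; last by move=> r; right.
split=> // T T_den AT x Tx; apply: boolp.contrapT => notAx.
apply: (A_max T).
  by split=> [r Ar|TA]; [apply: AT; left|apply: notAx; left; exact: TA].
rewrite /P (_ : (fun r => T r \/ T0 r) = T) //.
by apply: boolp.funext => r; apply: boolp.propext; split=> [[//|T0r]|Tr]; [exact: AT (or_intror T0r)|left].
Qed.

End MaximalLeftDen.

Section MaxLeftDenFamily.
Variables (R : pzRingType) (n : nat) (S : 'I_n -> R -> Prop).
Hypothesis R_loc : left_localizable R.
Hypothesis S_max_den : forall T, max_left_den T <-> exists i, set_eq T (S i).
Hypothesis S_inj : forall i j, set_eq (S i) (S j) -> i = j.

Let R_reduced := left_localizable_reduced R_loc.

Lemma S_max i : max_left_den (S i).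
Proof. by apply/S_max_den; exists i. Qed.

Lemma S_Ore i : left_Ore (S i).
Proof. by have [[]] := S_max i. Qed.

Lemma S_mult i : mult_subset (S i).
Proof. by have [] := S_Ore i. Qed.

Lemma S_neq0 i r : S i r -> r != 0.
Proof. by have [_ [S0 _]] := S_mult i; move=> Sir; apply/eqP => r0; rewrite r0 in Sir. Qed.

Lemma nonzero_in_S r : r != 0 -> exists k, S k r.
Proof.
move=> r_neq0; have [T [T_den Tr]] := R_loc r_neq0.
have [M [M_max TM]] := left_den_sub_max T_den.
have [k Mk] := (S_max_den M).1 M_max.
by exists k; apply/Mk; exact: TM.
Qed.

Lemma S_meet_ass i k : k != i -> exists p, S i p /\ ass (S k) p.
Proof.
move=> ki; apply: (max_left_den_meet_ass R_reduced (S_max i) (S_max k)).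
by move=> /S_inj eik; rewrite eik eqxx in ki.
Qed.

Lemma S_meet_all_ass i : exists p, S i p /\ forall k, k != i -> ass (S k) p.
Proof.
suff [p [Sip p_ass]] : exists p, S i p /\ forall k, k \in enum (predC1 i) -> ass (S k) p.
  by exists p; split=> // k ki; apply: p_ass; rewrite mem_enum.
have : i \notin enum (predC1 i) by rewrite mem_enum inE eqxx.
elim: (enum (predC1 i)) => [|k ks IH]; first by exists 1; have [] := S_mult i.
rewrite in_cons negb_or eq_sym => /andP [ki /IH [p [Sip p_ass]]].
have [p' [Sip' p'_ass]] := S_meet_ass ki.
exists (p * p'); split; first by have [_ [_ S_mul]] := S_mult i; exact: S_mul.
move=> j; rewrite in_cons => /orP [/eqP -> | j_ks]; first exact: (ass_mull p (S_Ore k) p'_ass).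
exact: (ass_mulr p' (p_ass j j_ks)).
Qed.

Lemma notin_ass_in_S i x : ~ ass (S i) x -> S i x.
Proof.
move=> x_nass; have [p [Sip p_ass]] := S_meet_all_ass i.
apply: (@max_left_den_factor R R_reduced (S i) x p (S_max i)).
  by move=> s Ss sx0; apply: x_nass; exists s.
have px_neq0 : p * x != 0 by apply/eqP => px0; apply: x_nass; exists p.
have [k Skpx] := nonzero_in_S px_neq0.
case: (eqVneq k i) Skpx => [-> // | ki] Skpx.
by case: (mult_subset_notin_ass (S_mult k) Skpx); exact: (ass_mulr x (p_ass k ki)).
Qed.

Lemma core_S i r : core (S i) r <-> S i r /\ forall j, j != i -> ass (S j) r.
Proof.
split=> [[Sir ker_ass]|[Sir r_ass]].
- split=> // j ji; apply: boolp.contrapT => r_nass.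
  have [p [Sjp p_ass]] : exists p, S j p /\ ass (S i) p by apply: S_meet_ass; rewrite eq_sym.
  have rp0 : r * p = 0 := (ker_ass p).2 p_ass.
  have [_ [S0 S_mul]] := S_mult j; apply: S0.
  by rewrite -rp0; exact: S_mul (notin_ass_in_S r_nass) Sjp.
- split=> // y; split=> [ry0|y_ass]; first by exists r.
  apply: boolp.contrapT => /eqP ry_neq0; have [k Sk] := nonzero_in_S ry_neq0.
  case: (eqVneq k i) Sk => [-> | ki] Sk.
  + exact: mult_subset_notin_ass (S_mult i) Sk (ass_mull r (S_Ore i) y_ass).
  + exact: mult_subset_notin_ass (S_mult k) Sk (ass_mulr y (r_ass k ki)).
Qed.

End MaxLeftDenFamily.

Theorem theorem4p5 (R : pzRingType) (n : nat) (S : 'I_n -> (R -> Prop)) :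
  left_localizable R ->
  (forall T : R -> Prop, max_left_den T <-> exists i, set_eq T (S i)) ->
  (forall i j, set_eq (S i) (S j) -> i = j) ->
  (n = 1%N -> forall i, set_eq (core (S i)) (S i) /\
                        set_eq (S i) (fun r => r != 0)) /\
  ((2 <= n)%N -> forall i,
     set_eq (core (S i)) (fun r => S i r /\ forall j, j != i -> ass (S j) r)).
Proof.
move=> R_loc S_max_den S_inj; split=> [n1 i|_ i r]; last exact: core_S.
have ord_eq (j : 'I_n) : j = i by subst n; rewrite (ord1 i) (ord1 j).
split=> r.
- rewrite core_S //; split=> [[] //|Sir]; split=> // j.
  by rewrite (ord_eq j) eqxx.
- split=> [|r_neq0]; first exact: S_neq0.
  by have [k] := nonzero_in_S R_loc S_max_den r_neq0; rewrite (ord_eq k).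
Qed.
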